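(* For every $n\ge 2$, $\beta(P_{2\infty}\,\Box\, P_n)=3$, and $S=\{(0,0),(0,n-1),(1,0)\}$ is a metric basis of $P_{2\infty}\,\Box\, P_n$.
   Context: $P_{2\infty}$ has vertex set $\mathbb Z$ and $P_n$ has vertex set $\{0,1,\dots,n-1\}$; in both, $i,j$ are adjacent iff $|i-j|=1$. The cartesian product $G\Box H$ has vertex set $V(G)\times V(H)$, where $(a,v)$ is adjacent to $(b,w)$ iff either $a=b$ and $vw\in E(H)$, or $v=w$ and $ab\in E(G)$. A vertex $x$ resolves $u,v$ if $d(u,x)\ne d(v,x)$ (shortest-path distance); a resolving set is a set of vertices resolving every pair of distinct vertices; $\beta$ is the minimum cardinality of a resolving set ($\infty$ if none is finite), and a metric basis is a resolving set of cardinality $\beta$. *)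

From Stdlib Require Import ZArith List.
Import ListNotations.
Open Scope Z_scope.

Inductive walk {V : Type} (adj : V -> V -> Prop) : V -> V -> nat -> Prop :=
| walk_nil : forall u, walk adj u u 0
| walk_cons : forall u w v k, adj u w -> walk adj w v k -> walk adj u v (S k).

Definition is_dist {V : Type} (adj : V -> V -> Prop) (u v : V) (k : nat) : Prop :=
  walk adj u v k /\ (forall j, walk adj u v j -> (k <= j)%nat).

(* x resolves u,v : d(u,x) <> d(v,x)  (the distances, possibly infinite, differ) *)
Definition resolves {V : Type} (adj : V -> V -> Prop) (x u v : V) : Prop :=
  ~ (forall k, is_dist adj u x k <-> is_dist adj v x k).

Definition resolving_set {V : Type} (adj : V -> V -> Prop) (S : V -> Prop) : Prop :=
  forall u v, u <> v -> exists x, S x /\ resolves adj x u v.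

Definition has_card {V : Type} (S : V -> Prop) (c : nat) : Prop :=
  exists l : list V, NoDup l /\ length l = c /\ (forall x, S x <-> In x l).

Definition metric_dim_is {V : Type} (adj : V -> V -> Prop) (b : nat) : Prop :=
  (exists S, resolving_set adj S /\ has_card S b) /\
  (forall S c, resolving_set adj S -> has_card S c -> (b <= c)%nat).

Definition metric_basis {V : Type} (adj : V -> V -> Prop) (S : V -> Prop) : Prop :=
  resolving_set adj S /\ exists b, has_card S b /\ metric_dim_is adj b.

Definition P2inf_adj (a b : Z) : Prop := Z.abs (a - b) = 1.

Definition Pn_vert (n : nat) : Type := {k : nat | (k < n)%nat}.
Definition Pn_adj (n : nat) (i j : Pn_vert n) : Prop :=
  (proj1_sig i + 1 = proj1_sig j)%nat \/ (proj1_sig j + 1 = proj1_sig i)%nat.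

Definition box_adj {A B : Type} (adjG : A -> A -> Prop) (adjH : B -> B -> Prop)
  (x y : A * B) : Prop :=
  (fst x = fst y /\ adjH (snd x) (snd y)) \/ (snd x = snd y /\ adjG (fst x) (fst y)).

Definition grid_adj (n : nat) : (Z * Pn_vert n) -> (Z * Pn_vert n) -> Prop :=
  box_adj P2inf_adj (Pn_adj n).

Definition S0 (n : nat) (x : Z * Pn_vert n) : Prop :=
  (fst x = 0 /\ proj1_sig (snd x) = 0%nat) \/
  (fst x = 0 /\ proj1_sig (snd x) = (n - 1)%nat) \/
  (fst x = 1 /\ proj1_sig (snd x) = 0%nat).

(* Shortest-path distance in the grid is the taxicab distance
   |a - b| + |i - j|: walks realising it are built row by row and column by
   column, and every edge changes the taxicab distance by at most one.  Once
   distances are explicit, "x resolves u, v" just means that the taxicab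
   distances from u and from v to x differ.
   - Upper bound: the distances to (0,0) and (0,n-1) give the row i of a vertex
     (a,i) and |a|; the distance to (1,0) then fixes the sign of a.  So S0
     resolves the grid, and it has exactly three elements.
   - Lower bound: for any two landmarks there are two distinct vertices far to
     the right at equal distances from both (moving one step right and one step
     toward the landmark rows), except when the landmarks sit on opposite
     boundary rows, where an explicit nearby pair works. *)

From Stdlib Require Import ZArith List Lia Arith.
Import ListNotations.
Open Scope Z_scope.

Lemma walk_app {V : Type} (adj : V -> V -> Prop) (u v w : V) (k l : nat) :
  walk adj u v k -> walk adj v w l -> walk adj u w (k + l).
Proof.
  intros Huv; revert w l.
  induction Huv as [u | u x v k Hux _ IH]; intros w l Hvw; simpl; [exact Hvw |].
  apply walk_cons with x; auto.
Qed.

Section ExplicitDistance.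
Variables (V : Type) (adj : V -> V -> Prop) (d : V -> V -> nat).
Hypothesis d_walk : forall u v, walk adj u v (d u v).
Hypothesis d_minimal : forall u v k, walk adj u v k -> (d u v <= k)%nat.

Lemma is_dist_iff (u v : V) (k : nat) : is_dist adj u v k <-> k = d u v.
Proof.
  split.
  - intros [Hwalk Hmin].
    pose proof (d_minimal _ _ _ Hwalk); pose proof (Hmin _ (d_walk u v)); lia.
  - intros ->; split; [apply d_walk | apply d_minimal].
Qed.

Lemma resolves_iff (x u v : V) : resolves adj x u v <-> d u x <> d v x.
Proof.
  unfold resolves; split.
  - intros Hres Heq; apply Hres; intro k; rewrite !is_dist_iff, Heq; tauto.
  - intros Hneq Hsame; apply Hneq.
    apply (proj1 (is_dist_iff v x _)), Hsame, is_dist_iff; reflexivity.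
Qed.

End ExplicitDistance.

Lemma resolving_card_ge3 {V : Type} (adj : V -> V -> Prop) (x0 : V) :
  (forall x y : V, exists u v,
      u <> v /\ ~ resolves adj x u v /\ ~ resolves adj y u v) ->
  forall S c, resolving_set adj S -> has_card S c -> (3 <= c)%nat.
Proof.
  intros Hpair S c Hres [l [_ [Hlen HS]]].
  destruct (le_lt_dec 3 c) as [| Hc]; [assumption | exfalso].
  assert (Hcover : exists x y, forall z, S z -> z = x \/ z = y).
  { destruct l as [| x [| y [| w l']]]; simpl in Hlen; try lia.
    - exists x0, x0; intros z Hz; apply HS in Hz; destruct Hz.
    - exists x, x; intros z Hz; apply HS in Hz; simpl in Hz; intuition.
    - exists x, y; intros z Hz; apply HS in Hz; simpl in Hz; intuition. }
  destruct Hcover as (x & y & Hcover).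
  destruct (Hpair x y) as (u & v & Huv & Hx & Hy).
  destruct (Hres u v Huv) as (w & Sw & Hw).
  destruct (Hcover w Sw); subst; contradiction.
Qed.

Section Grid.
Variable n : nat.

Notation vertex := (Z * Pn_vert n)%type.

Definition level (x : vertex) : Z := Z.of_nat (proj1_sig (snd x)).

Definition taxi (x y : vertex) : Z :=
  Z.abs (fst x - fst y) + Z.abs (level x - level y).

Definition grid_dist (x y : vertex) : nat := Z.to_nat (taxi x y).

Lemma Pn_vert_eq (i j : Pn_vert n) : proj1_sig i = proj1_sig j -> i = j.
Proof.
  destruct i as [i hi], j as [j hj]; simpl; intros ->; f_equal; apply le_unique.
Qed.

Lemma walk_horizontal (m : nat) (a b : Z) (i : Pn_vert n) :
  Z.abs (a - b) = Z.of_nat m -> walk (grid_adj n) (a, i) (b, i) m.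
Proof.
  revert a; induction m as [| m IH]; intros a Hab.
  - replace b with a by lia; constructor.
  - set (step := if Z_lt_le_dec a b then 1 else -1).
    apply walk_cons with (a + step, i).
    + right; split; [reflexivity |].
      unfold P2inf_adj, step; simpl; destruct (Z_lt_le_dec a b); lia.
    + apply IH; unfold step; destruct (Z_lt_le_dec a b); lia.
Qed.

Lemma walk_vertical (m : nat) (a : Z) (i j : Pn_vert n) :
  Z.abs (level (a, i) - level (a, j)) = Z.of_nat m ->
  walk (grid_adj n) (a, i) (a, j) m.
Proof.
  revert i; induction m as [| m IH]; intros [i hi] Hij; unfold level in *; simpl in *.
  - replace (exist _ i hi) with j by (apply Pn_vert_eq; simpl; lia); constructor.
  - destruct j as [j hj]; simpl in Hij.
    destruct (Nat.lt_ge_cases i j) as [Hlt | Hge].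
    + assert (hup : (i + 1 < n)%nat) by lia.
      apply walk_cons with (a, exist _ (i + 1)%nat hup).
      * left; split; [reflexivity | left; reflexivity].
      * apply IH; unfold level; simpl; lia.
    + assert (hdown : (i - 1 < n)%nat) by lia.
      apply walk_cons with (a, exist _ (i - 1)%nat hdown).
      * left; split; [reflexivity | right; simpl; lia].
      * apply IH; unfold level; simpl; lia.
Qed.

Lemma taxi_nonneg (x y : vertex) : 0 <= taxi x y.
Proof. unfold taxi; lia. Qed.

Lemma grid_dist_walk (x y : vertex) : walk (grid_adj n) x y (grid_dist x y).
Proof.
  destruct x as [a i], y as [b j]; unfold grid_dist, taxi; simpl.
  replace (Z.to_nat _) with
    (Z.to_nat (Z.abs (a - b)) + Z.to_nat (Z.abs (level (b, i) - level (b, j))))%nat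
    by (unfold level; simpl; lia).
  apply walk_app with (b, i).
  - apply walk_horizontal; lia.
  - apply walk_vertical; lia.
Qed.

(* Each edge changes one coordinate by one, so no walk is shorter. *)
Lemma grid_dist_minimal (x y : vertex) (k : nat) :
  walk (grid_adj n) x y k -> (grid_dist x y <= k)%nat.
Proof.
  unfold grid_dist.
  induction 1 as [u | u w v k Hedge _ IH].
  - unfold taxi; lia.
  - destruct u as [a [i hi]], w as [b [j hj]], v as [c [l hl]].
    unfold taxi, level in *; simpl in *.
    unfold grid_adj, box_adj, Pn_adj, P2inf_adj in Hedge; simpl in Hedge.
    destruct Hedge as [[Hcol Hlev] | [Hlev Hcol]].
    + lia.
    + apply (f_equal (@proj1_sig _ _)) in Hlev; simpl in Hlev; lia.
Qed.

Lemma grid_resolves_iff (x u v : vertex) :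
  resolves (grid_adj n) x u v <-> taxi u x <> taxi v x.
Proof.
  rewrite (resolves_iff _ _ grid_dist grid_dist_walk grid_dist_minimal).
  unfold grid_dist; pose proof (taxi_nonneg u x); pose proof (taxi_nonneg v x); lia.
Qed.

Hypothesis n_ge2 : (2 <= n)%nat.

Definition vtx (k : nat) (hk : (k < n)%nat) : Pn_vert n := exist _ k hk.
Definition bottom : Pn_vert n := vtx 0 ltac:(lia).
Definition second : Pn_vert n := vtx 1 ltac:(lia).
Definition top : Pn_vert n := vtx (n - 1) ltac:(lia).
Definition below_top : Pn_vert n := vtx (n - 2) ltac:(lia).

Ltac grid_coords :=
  unfold taxi, level, bottom, second, top, below_top, vtx in *; cbn [fst snd proj1_sig] in *.

Lemma vertex_neq_col (u v : vertex) : fst u <> fst v -> u <> v.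
Proof. intros Hcol ->; apply Hcol; reflexivity. Qed.

(* Far to the right, (T,0) and (T+1,1) are equidistant from any landmark
   above level 0: the extra step right is compensated by one step up. *)
Lemma equidistant_low_pair (T : Z) (x : vertex) :
  fst x <= T -> 1 <= level x ->
  taxi (T, bottom) x = taxi (T + 1, second) x.
Proof. intros; grid_coords; lia. Qed.

Lemma equidistant_high_pair (T : Z) (x : vertex) :
  fst x <= T -> level x <= Z.of_nat n - 2 ->
  taxi (T, top) x = taxi (T + 1, below_top) x.
Proof. intros; grid_coords; lia. Qed.

Lemma level_bounds (x : vertex) : 0 <= level x <= Z.of_nat n - 1.
Proof. destruct x as [a [i hi]]; unfold level; simpl; lia. Qed.

Lemma opposite_rows_pair (a b : Z) :
  exists u v, u <> v /\
    taxi u (a, bottom) = taxi v (a, bottom) /\ taxi u (b, top) = taxi v (b, top).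
Proof.
  destruct (Z_lt_le_dec a b) as [Hab | Hab]; [| destruct (Z.eq_dec a b) as [-> | Hne]];
    [exists (a, second), (a + 1, bottom)
    | exists (b + 1, bottom), (b - 1, bottom)
    | exists (a, second), (a - 1, bottom)];
    (split; [apply vertex_neq_col; simpl; lia | grid_coords; lia]).
Qed.

(* No two landmarks resolve the grid: if neither is on level 0 or neither is
   on level n-1, a far-right pair works; otherwise they lie on opposite
   boundary rows. *)
Lemma two_landmarks_fail (x y : vertex) :
  exists u v, u <> v /\ taxi u x = taxi v x /\ taxi u y = taxi v y.
Proof.
  set (T := Z.abs (fst x) + Z.abs (fst y)).
  assert (HxT : fst x <= T) by (unfold T; lia).
  assert (HyT : fst y <= T) by (unfold T; lia).
  pose proof (level_bounds x); pose proof (level_bounds y).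
  assert (Hneq : forall p q : Pn_vert n, (T, p) <> (T + 1, q))
    by (intros; apply vertex_neq_col; simpl; lia).
  destruct (Z.eq_dec (level x) 0) as [Hx0 | Hx0];
    destruct (Z.eq_dec (level y) 0) as [Hy0 | Hy0].
  - exists (T, top), (T + 1, below_top).
    split; [apply Hneq | split; apply equidistant_high_pair; lia].
  - destruct (Z.eq_dec (level y) (Z.of_nat n - 1)) as [Hy1 | Hy1].
    + destruct x as [a i], y as [b j].
      replace i with bottom in * by (apply Pn_vert_eq; grid_coords; lia).
      replace j with top in * by (apply Pn_vert_eq; grid_coords; lia).
      apply opposite_rows_pair.
    + exists (T, top), (T + 1, below_top).
      split; [apply Hneq | split; apply equidistant_high_pair; lia].
  - destruct (Z.eq_dec (level x) (Z.of_nat n - 1)) as [Hx1 | Hx1].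
    + destruct x as [a i], y as [b j].
      replace j with bottom in * by (apply Pn_vert_eq; grid_coords; lia).
      replace i with top in * by (apply Pn_vert_eq; grid_coords; lia).
      destruct (opposite_rows_pair b a) as (u & v & Huv & Hb & Ha).
      exists u, v; auto.
    + exists (T, top), (T + 1, below_top).
      split; [apply Hneq | split; apply equidistant_high_pair; lia].
  - exists (T, bottom), (T + 1, second).
    split; [apply Hneq | split; apply equidistant_low_pair; lia].
Qed.

Lemma S0_determines (u v : vertex) :
  taxi u (0, bottom) = taxi v (0, bottom) ->
  taxi u (0, top) = taxi v (0, top) ->
  taxi u (1, bottom) = taxi v (1, bottom) -> u = v.
Proof.
  destruct u as [p [i hi]], v as [q [j hj]]; grid_coords; intros H1 H2 H3.
  f_equal; [lia | apply Pn_vert_eq; simpl; lia].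
Qed.

Lemma S0_resolving : resolving_set (grid_adj n) (S0 n).
Proof.
  intros u v Huv.
  destruct (Z.eq_dec (taxi u (0, bottom)) (taxi v (0, bottom))) as [E1 | E1];
    [destruct (Z.eq_dec (taxi u (0, top)) (taxi v (0, top))) as [E2 | E2];
      [destruct (Z.eq_dec (taxi u (1, bottom)) (taxi v (1, bottom))) as [E3 | E3] |] |].
  - exfalso; exact (Huv (S0_determines u v E1 E2 E3)).
  - exists (1, bottom); split; [right; right; simpl; auto | now apply grid_resolves_iff].
  - exists (0, top); split; [right; left; simpl; auto | now apply grid_resolves_iff].
  - exists (0, bottom); split; [left; simpl; auto | now apply grid_resolves_iff].
Qed.

Lemma S0_card : has_card (S0 n) 3.
Proof.
  exists [(0, bottom); (0, top); (1, bottom)]; split; [| split; [reflexivity |]].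
  - assert (Htb : top <> bottom)
      by (intro H; apply (f_equal (@proj1_sig _ _)) in H; simpl in H; lia).
    repeat constructor; simpl.
    + intros [H | [H | []]]; [apply Htb; exact (f_equal snd H) | discriminate H].
    + intros [H | []]; discriminate H.
    + tauto.
  - intros [a i]; unfold S0; simpl; split.
    + intros [[-> H] | [[-> H] | [-> H]]]; [left | right; left | right; right; left];
        f_equal; apply Pn_vert_eq; symmetry; exact H.
    + intros [H | [H | [H | []]]]; injection H; intros <- <-; simpl; auto.
Qed.

Lemma grid_resolving_card_ge3 (S : vertex -> Prop) (c : nat) :
  resolving_set (grid_adj n) S -> has_card S c -> (3 <= c)%nat.
Proof.
  apply (resolving_card_ge3 _ (0, bottom)).
  intros x y; destruct (two_landmarks_fail x y) as (u & v & Huv & Hx & Hy).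
  exists u, v; rewrite !grid_resolves_iff; tauto.
Qed.

End Grid.

Theorem proposition5 (n : nat) (hn : (2 <= n)%nat) :
  metric_dim_is (grid_adj n) 3 /\ metric_basis (grid_adj n) (S0 n).
Proof.
  assert (Hdim : metric_dim_is (grid_adj n) 3).
  { split.
    - exists (S0 n); split; [apply S0_resolving | apply S0_card]; exact hn.
    - intros S c; apply grid_resolving_card_ge3; exact hn. }
  split; [exact Hdim |].
  split; [apply S0_resolving; exact hn |].
  exists 3%nat; split; [apply S0_card; exact hn | exact Hdim].
Qed.
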